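(* Let $\Gamma((r^S)_{S\subseteq I})$ be a quitting game satisfying $r^i_i=0$ for all $i\in I$. If there is a normal player $i\in I_*$ such that $r^i\in\mathbb R^N_{\ge0}$, then for every $\varepsilon>0$ the game has a stationary $\varepsilon$-equilibrium.
   Context: A quitting game $\Gamma((r^S)_{S\subseteq I})$: finite player set $I=[N]$, vectors $r^S\in[-1,1]^N$ for all $S\subseteq I$; at each stage $t\in\mathbb N$ each player chooses to continue or quit; with $t^*$ the first stage at which some player quits and $S^*$ the set of players quitting then ($S^*=\emptyset$ if nobody ever quits), the payoff is $r^{S^*}$. Write $r^i:=r^{\{i\}}$. A (behavior) strategy of player $i$ is a sequence $x_i=(x_i^t)_{t\in\mathbb N}\subset[0,1]$, $x_i^t$ being the probability of quitting at stage $t$ if nobody quit before; it is stationary if $x_i^t$ does not depend on $t$. $\gamma(x):=\mathbb E_x[r^{S^*}]$. A profile $x$ is an $\varepsilon$-equilibrium if $\gamma_i(x)\ge\gamma_i(x_i',x_{-i})-\varepsilon$ for all $i$ and all strategies $x_i'$. Normal players: $I_0:=I$, $I_{l+1}:=\{i\in I_l:\ \exists j\in I_l,\ j\neq i,\ r^j_i\le0\}$, and $I_*:=\bigcap_{l}I_l$. Players in $I_*$ are normal, the others abnormal. *)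

From mathcomp Require Import all_boot.
From Stdlib Require Import Reals ClassicalEpsilon.
Set Implicit Arguments. Unset Strict Implicit. Unset Printing Implicit Defensive.

Local Open Scope R_scope.

(* Players are 'I_N.  A quitting game is given by r : {set 'I_N} -> 'I_N -> R
   (r S = payoff vector when S is the set of players quitting first). *)
Definition game (N : nat) := {set 'I_N} -> 'I_N -> R.

Definition game_bounded N (r : game N) : Prop :=
  forall S i, -1 <= r S i <= 1.

(* Behaviour strategy profile: x i t = prob. player i quits at stage t
   (given nobody quit before). *)
Definition profile (N : nat) := 'I_N -> nat -> R.

Definition is_strategy (y : nat -> R) : Prop := forall t, 0 <= y t <= 1.
Definition is_profile N (x : profile N) : Prop := forall i, is_strategy (x i).

Definition is_stationary N (x : profile N) : Prop :=
  forall i t, x i t = x i 0%nat.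

Definition noquit N (x : profile N) (T : nat) : R :=
  \big[Rmult/1]_(s < T) \big[Rmult/1]_(j : 'I_N) (1 - x j s).

(* probability that t is the first quitting stage and S the quitting set *)
Definition pstop N (x : profile N) (t : nat) (S : {set 'I_N}) : R :=
  noquit x t * (\big[Rmult/1]_(j in S) x j t)
             * (\big[Rmult/1]_(j in ~: S) (1 - x j t)).

(* expected payoff of player i, truncated at horizon T:
   quitting before T counted with its payoff; otherwise payoff r^emptyset *)
Definition payoffT N (r : game N) (x : profile N) (T : nat) (i : 'I_N) : R :=
  \big[Rplus/0]_(t < T) \big[Rplus/0]_(S : {set 'I_N} | S != set0)
      (pstop x t S * r S i)
  + noquit x T * r set0 i.

(* gamma_i(x) = E_x[r^{S*}_i], the limit of the truncated expectations
   (the limit always exists; it is selected by classical choice). *)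
Definition gamma N (r : game N) (x : profile N) (i : 'I_N) : R :=
  epsilon (inhabits 0) (fun l => Un_cv (fun T => payoffT r x T i) l).

Definition deviate N (x : profile N) (i : 'I_N) (y : nat -> R) : profile N :=
  fun j => if j == i then y else x j.

Definition eps_equilibrium N (r : game N) (x : profile N) (eps : R) : Prop :=
  forall (i : 'I_N) (y : nat -> R), is_strategy y ->
    gamma r x i >= gamma r (deviate x i y) i - eps.

(* Normal players: I_0 = I,
   I_{l+1} = {i in I_l | exists j in I_l, j <> i, r^{j}_i <= 0},
   I_* = intersection of all I_l. *)
Fixpoint inIl N (r : game N) (l : nat) (i : 'I_N) : Prop :=
  match l with
  | O => True
  | S l' => inIl r l' i /\ exists j : 'I_N, j <> i /\ inIl r l' j /\ r [set j] i <= 0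
  end.

Definition normal N (r : game N) (i : 'I_N) : Prop := forall l, inIl r l i.

From HB Require Import structures.
From mathcomp Require Import all_boot.
From Stdlib Require Import Reals Lra ClassicalEpsilon.
Set Implicit Arguments. Unset Strict Implicit. Unset Printing Implicit Defensive.
Local Open Scope R_scope.

(* Since [i] is normal there is a player [j <> i] with [r^j_i <= 0] (only this
   first step of the normality condition is used).  In the stationary profile
   where [i] quits with probability [d], [j] with probability [d^2] and everybody
   else continues, play stops almost surely, and up to [O(d)] it stops with [i]
   quitting alone, so every player [k] gets about [r^i_k >= 0].  A deviating
   [k <> i] cannot do better: stopping alone yields [r^k_k = 0], and the other
   outcomes have probability [O(d)] relative to the stopping probability.  A
   deviating [i] cannot do better than [r^i_i = 0] either: if [i] continues, [j]
   stops alone and [r^j_i <= 0], joint stops costing only [O(d^2)]. *)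

HB.instance Definition _ := Monoid.isComLaw.Build R 0 Rplus
  (fun x y z => esym (Rplus_assoc x y z)) Rplus_comm Rplus_0_l.
HB.instance Definition _ := Monoid.isComLaw.Build R 1 Rmult
  (fun x y z => esym (Rmult_assoc x y z)) Rmult_comm Rmult_1_l.
HB.instance Definition _ := Monoid.isMulLaw.Build R 0 Rmult Rmult_0_l Rmult_0_r.
HB.instance Definition _ := Monoid.isAddLaw.Build R Rmult Rplus
  Rmult_plus_distr_r Rmult_plus_distr_l.

Section RealBigops.
Variables (I : finType) (P : pred I).

Lemma Rsum_le (F G : I -> R) :
  (forall i, P i -> F i <= G i) ->
  \big[Rplus/0]_(i | P i) F i <= \big[Rplus/0]_(i | P i) G i.
Proof. by move=> FG; apply: (big_ind2 Rle) => //; [lra | move=> *; lra]. Qed.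

Lemma Rsum_ge0 (F : I -> R) :
  (forall i, P i -> 0 <= F i) -> 0 <= \big[Rplus/0]_(i | P i) F i.
Proof. by move=> F0; apply: (big_ind (Rle 0)) => //; [lra | move=> *; lra]. Qed.

Lemma Rsum_le_sumT (F : I -> R) :
  (forall i, 0 <= F i) -> \big[Rplus/0]_(i | P i) F i <= \big[Rplus/0]_i F i.
Proof.
move=> F0; rewrite [X in _ <= X](bigID P) /=.
have : 0 <= \big[Rplus/0]_(i | ~~ P i) F i.
  by apply: (big_ind (Rle 0)) => //; [lra | move=> *; lra].
lra.
Qed.

Lemma Rprod_ge0_le1 (F : I -> R) :
  (forall i, P i -> 0 <= F i <= 1) -> 0 <= \big[Rmult/1]_(i | P i) F i <= 1.
Proof.
move=> F01; apply: (big_ind (fun v => 0 <= v <= 1)) => //; first lra.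
by move=> u v hu hv; split; nra.
Qed.

Lemma Rsum_le_point (j : I) (e : R) (F : I -> R) :
  0 <= e -> (forall i, P i -> F i <= (if i == j then e else 0)) ->
  \big[Rplus/0]_(i | P i) F i <= e.
Proof.
move=> e0 Fj; apply: Rle_trans (Rsum_le Fj) _.
apply: Rle_trans (Rsum_le_sumT _) _; first by move=> i; case: ifP => _; lra.
rewrite (bigD1 j) //= eqxx big1 => [|i /negbTE -> //]; lra.
Qed.

End RealBigops.

Definition split_prod N (a b : 'I_N -> R) (S : {set 'I_N}) :=
  \big[Rmult/1]_(j in S) a j * \big[Rmult/1]_(j in ~: S) b j.

Lemma sum_split_prod N (a b : 'I_N -> R) :
  \big[Rplus/0]_(S : {set 'I_N}) split_prod a b S = \big[Rmult/1]_j (a j + b j).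
Proof.
pose F j (c : bool) := if c then a j else b j.
have -> : \big[Rmult/1]_j (a j + b j) = \big[Rmult/1]_j \big[Rplus/0]_c F j c.
  by apply: eq_bigr => j _; rewrite big_bool.
rewrite bigA_distr_bigA /= (reindex (fun f : {ffun 'I_N -> bool} => [set j | f j])) /=.
  apply: eq_bigr => f _; rewrite /split_prod [RHS](bigID (fun j => f j)) /=.
  by congr (_ * _); apply: eq_big => j; rewrite ?inE /F //; case: (f j).
exists (fun S : {set 'I_N} => [ffun j => j \in S]) => [f _ | S _].
  by apply/ffunP => j; rewrite ffunE inE.
by apply/setP => j; rewrite inE ffunE.
Qed.

(* Killing [b] on [M] keeps exactly the terms with [M \subset S]. *)
Lemma sum_split_prod_supset N (a b : 'I_N -> R) (M : {set 'I_N}) :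
  \big[Rplus/0]_(S : {set 'I_N}) (if M \subset S then split_prod a b S else 0) =
  \big[Rmult/1]_(j in M) a j * \big[Rmult/1]_(j in ~: M) (a j + b j).
Proof.
pose bM j := if j \in M then 0 else b j.
transitivity (\big[Rplus/0]_(S : {set 'I_N}) split_prod a bM S).
  apply: eq_bigr => S _; rewrite /split_prod; case: (boolP (M \subset S)) => MS.
    congr (_ * _); apply: eq_bigr => j /setCP jS.
    by rewrite /bM ifF //; apply/negP => /(subsetP MS).
  case/subsetPn: MS => j jM jS.
  by rewrite [X in _ * X](bigD1 j) /= ?inE // /bM jM; lra.
rewrite sum_split_prod (bigID (mem M)) /=.
congr (_ * _); apply: eq_big => j; rewrite ?inE // /bM; case: (j \in M) => // _; lra.
Qed.

Lemma subset1_eq (T : finType) (S : {set T}) a :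
  S != set0 -> S \subset [set a] -> S = [set a].
Proof. by move=> S0; rewrite subset1 (negbTE S0) orbF => /eqP. Qed.

Lemma subset2_eq (T : finType) (S : {set T}) a b :
  S != set0 -> S \subset [set a; b] -> a \notin S -> S = [set b].
Proof.
move=> S0 Sab aS; apply: subset1_eq => //; apply/subsetP => m mS.
by move/subsetP/(_ m mS): Sab; rewrite !inE => /orP [/eqP ma | //]; rewrite -ma mS in aS.
Qed.

Section Stage.
Variables (N : nat) (x : profile N) (t : nat).
Hypothesis x_profile : is_profile x.

Definition stage_prob (S : {set 'I_N}) :=
  split_prod (fun j => x j t) (fun j => 1 - x j t) S.

Definition quit_prob := 1 - \big[Rmult/1]_(j : 'I_N) (1 - x j t).

Definition stage_payoff (r : game N) (k : 'I_N) :=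
  \big[Rplus/0]_(S : {set 'I_N} | S != set0) (stage_prob S * r S k).

Definition mem_weight (P : pred 'I_N) (S : {set 'I_N}) :=
  \big[Rplus/0]_(m | P m) (if m \in S then stage_prob S else 0).

Lemma stage_prob_ge0_le1 S : 0 <= stage_prob S <= 1.
Proof.
have h1 : 0 <= \big[Rmult/1]_(j in S) x j t <= 1.
  by apply: Rprod_ge0_le1 => j _; apply: x_profile.
have h2 : 0 <= \big[Rmult/1]_(j in ~: S) (1 - x j t) <= 1.
  by apply: Rprod_ge0_le1 => j _; have := x_profile j t; lra.
rewrite /stage_prob /split_prod; split; nra.
Qed.

Lemma quit_prob_ge0_le1 : 0 <= quit_prob <= 1.
Proof.
have : 0 <= \big[Rmult/1]_(j : 'I_N) (1 - x j t) <= 1.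
  by apply: Rprod_ge0_le1 => j _; have := x_profile j t; lra.
rewrite /quit_prob; lra.
Qed.

Lemma quit_prob_ge m : x m t <= quit_prob.
Proof.
rewrite /quit_prob (bigD1 m) //=; set p := \big[Rmult/1]_(j | j != m) _.
have : 0 <= p <= 1 by apply: Rprod_ge0_le1 => j _; have := x_profile j t; lra.
have := x_profile m t; nra.
Qed.

Lemma sum_stage_prob_nonempty :
  \big[Rplus/0]_(S : {set 'I_N} | S != set0) stage_prob S = quit_prob.
Proof.
have stage_prob_set0 : stage_prob set0 = 1 - quit_prob.
  rewrite /stage_prob /split_prod big_set0 /quit_prob.
  have -> : \big[Rmult/1]_(j in ~: set0) (1 - x j t) = \big[Rmult/1]_(j : 'I_N) (1 - x j t).
    by apply: eq_bigl => j; rewrite !inE.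
  ring.
have total : \big[Rplus/0]_(S : {set 'I_N}) stage_prob S = 1.
  by rewrite sum_split_prod big1 // => j _; ring.
rewrite (bigD1 set0) //= stage_prob_set0 in total.
move: total; set s := \big[Rplus/0]_(S | S != set0) stage_prob S; lra.
Qed.

Lemma sum_stage_prob_mem m :
  \big[Rplus/0]_(S : {set 'I_N}) (if m \in S then stage_prob S else 0) = x m t.
Proof.
under eq_bigr => S _ do rewrite -sub1set.
by rewrite sum_split_prod_supset big_set1 big1 => [|j _]; ring.
Qed.

Lemma sum_stage_prob_mem2 a b : a != b ->
  \big[Rplus/0]_(S : {set 'I_N}) (if (a \in S) && (b \in S) then stage_prob S else 0)
  = x a t * x b t.
Proof.
move=> ab; under eq_bigr => S _ do rewrite -!sub1set -subUset.
rewrite sum_split_prod_supset big_setU1 ?inE // big_set1 /= big1 => [|j _]; ring.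
Qed.

Lemma if_stage_prob_ge0 (c : bool) S : 0 <= (if c then stage_prob S else 0).
Proof. by case: c; [case: (stage_prob_ge0_le1 S) | lra]. Qed.

Lemma mem_weight_ge0 P S : 0 <= mem_weight P S.
Proof. by apply: Rsum_ge0 => m _; apply: if_stage_prob_ge0. Qed.

Lemma mem_weight_ge (P : pred 'I_N) (S : {set 'I_N}) m :
  m \in S -> P m -> stage_prob S <= mem_weight P S.
Proof.
move=> mS Pm; rewrite /mem_weight (bigD1 m) //= mS -{1}[stage_prob S]Rplus_0_r.
by apply: Rplus_le_compat_l; apply: Rsum_ge0 => m' _; apply: if_stage_prob_ge0.
Qed.

Lemma sum_mem_weight P :
  \big[Rplus/0]_(S : {set 'I_N}) mem_weight P S = \big[Rplus/0]_(m | P m) x m t.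
Proof. by rewrite exchange_big; apply: eq_bigr => m _; apply: sum_stage_prob_mem. Qed.

Lemma stage_payoff_bounds r k :
  game_bounded r -> - quit_prob <= stage_payoff r k <= quit_prob.
Proof.
move=> r_bounded; rewrite -sum_stage_prob_nonempty /stage_payoff.
have term S : -1 * stage_prob S <= stage_prob S * r S k <= stage_prob S.
  by have := stage_prob_ge0_le1 S; have := r_bounded S k; split; nra.
split; last by apply: Rsum_le => S _; case: (term S).
rewrite -[X in - X <= _]Rmult_1_l Ropp_mult_distr_l big_distrr /=.
by apply: Rsum_le => S _; case: (term S).
Qed.

Lemma stage_payoff_ge_single r k i A e :
  game_bounded r -> 0 <= A -> A <= r [set i] k ->
  \big[Rplus/0]_(m | m != i) x m t <= e ->
  A * quit_prob - (A + 1) * e <= stage_payoff r k.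
Proof.
move=> r_bounded A_ge0 A_le others_le; pose others m := m != i.
have termwise S : S != set0 ->
    A * stage_prob S + - (A + 1) * mem_weight others S <= stage_prob S * r S k.
  move=> S0; have hW := stage_prob_ge0_le1 S; have hr := r_bounded S k.
  case: (boolP (S \subset [set i])) => [Si | /subsetPn [m mS mi]].
    have -> : r S k = r [set i] k by rewrite (subset1_eq S0 Si).
    have := mem_weight_ge0 others S; nra.
  rewrite in_set1 in mi; have := @mem_weight_ge others S m mS mi; nra.
apply: Rle_trans _ (Rsum_le termwise).
rewrite big_split -!big_distrr /= sum_stage_prob_nonempty.
apply: Rplus_le_compat_l; rewrite -Ropp_mult_distr_l.
apply/Ropp_le_contravar/Rmult_le_compat_l; first lra.
apply: Rle_trans others_le.
by rewrite -sum_mem_weight; apply: Rsum_le_sumT => S; apply: mem_weight_ge0.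
Qed.

Lemma stage_payoff_le_pair r k a b A e :
  game_bounded r -> a != b -> 0 <= A -> r [set a] k <= A -> r [set b] k <= 0 ->
  \big[Rplus/0]_(m | m \notin [set a; b]) x m t <= e ->
  stage_payoff r k <= A * quit_prob + (e + x a t * x b t).
Proof.
move=> r_bounded ab A_ge0 ra_le rb_le0 others_le; pose others m := m \notin [set a; b].
pose both (S : {set 'I_N}) := if (a \in S) && (b \in S) then stage_prob S else 0.
have both_ge0 S : 0 <= both S by apply: if_stage_prob_ge0.
have termwise S : S != set0 ->
    stage_prob S * r S k <= A * stage_prob S + (mem_weight others S + both S).
  move=> S0; have hW := stage_prob_ge0_le1 S; have hr := r_bounded S k.
  have hG := mem_weight_ge0 others S.
  case: (boolP (S \subset [set a; b])) => [Sab | /subsetPn [m mS mab]]; last first.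
    by have := both_ge0 S; have := @mem_weight_ge others S m mS mab; nra.
  rewrite /both; case: ifPn => [_ | ]; first nra.
  rewrite negb_and => /orP [aS | bS].
    have -> : r S k = r [set b] k by rewrite (subset2_eq S0 Sab aS).
    nra.
  rewrite setUC in Sab; have -> : r S k = r [set a] k by rewrite (subset2_eq S0 Sab bS).
  nra.
apply: Rle_trans (Rsum_le termwise) _.
rewrite big_split -big_distrr /= sum_stage_prob_nonempty.
apply/Rplus_le_compat_l/Rle_trans.
  by apply: Rsum_le_sumT => S; have := mem_weight_ge0 others S; have := both_ge0 S; lra.
by rewrite big_split /= sum_mem_weight sum_stage_prob_mem2 //; apply: Rplus_le_compat_r.
Qed.

End Stage.

Lemma cvg_const (c : R) : Un_cv (fun _ => c) c.
Proof. by move=> e e_gt0; exists 0%nat => n _; rewrite Rdist_eq. Qed.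

Lemma cvg_dominated_increments (u v : nat -> R) :
  (forall n, Rabs (u n.+1 - u n) <= v n - v n.+1) ->
  {l | Un_cv v l} -> {l | Un_cv u l}.
Proof.
move=> inc /CV_Cauchy v_cauchy; apply: R_complete => eps eps_gt0.
have gap (p q : nat) : (p <= q)%nat -> Rabs (u q - u p) <= v p - v q.
  move=> pq; rewrite -(subnKC pq); elim: (q - p)%nat => [|d IH].
    by rewrite addn0 !Rminus_diag Rabs_R0; lra.
  rewrite addnS; set n := (p + d)%nat in IH *.
  have -> : u n.+1 - u p = (u n.+1 - u n) + (u n - u p) by ring.
  by have := Rabs_triang (u n.+1 - u n) (u n - u p); have := inc n; lra.
have [M HM] := v_cauchy eps eps_gt0; exists M => n m Hn Hm.
have := HM n m Hn Hm; rewrite /Rdist => hv.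
have := Rle_abs (v n - v m); have := Rle_abs (v m - v n).
rewrite (Rabs_minus_sym (v m)) => hv1 hv2.
case: (leqP n m) => [nm | /ltnW mn].
  by rewrite Rabs_minus_sym; have := gap n m nm; lra.
by have := gap m n mn; lra.
Qed.

Section Play.
Variables (N : nat) (x : profile N).
Hypothesis x_profile : is_profile x.

Lemma noquit_ge0_le1 T : 0 <= noquit x T <= 1.
Proof.
by apply: Rprod_ge0_le1 => s _; apply: Rprod_ge0_le1 => j _; have := x_profile j s; lra.
Qed.

Lemma noquit0 : noquit x 0 = 1.
Proof. by rewrite /noquit big_ord0. Qed.

Lemma noquitS T : noquit x T.+1 = noquit x T * (1 - quit_prob x T).
Proof.
rewrite /noquit big_ord_recr /= /quit_prob.
set B := \big[Rmult/1]_(j < N) (1 - x j T); set A := \big[Rmult/1]_(s < T) _; ring.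
Qed.

Lemma sum_noquit_quit_prob T :
  \big[Rplus/0]_(t < T) (noquit x t * quit_prob x t) = 1 - noquit x T.
Proof.
elim: T => [|T IH]; first by rewrite big_ord0 noquit0; ring.
by rewrite big_ord_recr /= IH noquitS; ring.
Qed.

Lemma noquit_cvg0 delta :
  0 < delta -> (forall t, delta <= quit_prob x t) -> Un_cv (noquit x) 0.
Proof.
move=> delta_gt0 delta_le.
have delta_le1 : delta <= 1 by have := quit_prob_ge0_le1 0 x_profile; have := delta_le 0%nat; lra.
have geom T : noquit x T <= (1 - delta) ^ T.
  elim: T => [|T IH]; first by rewrite noquit0 /=; lra.
  rewrite noquitS /=; have := pow_le (1 - delta) T ltac:(lra).
  have := noquit_ge0_le1 T; have := delta_le T; have := quit_prob_ge0_le1 T x_profile; nra.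
move=> e e_gt0; have [|M HM] := pow_lt_1_zero (1 - delta) _ e e_gt0.
  by rewrite Rabs_pos_eq; lra.
exists M => T HT; rewrite /Rdist Rminus_0_r Rabs_pos_eq; last by case: (noquit_ge0_le1 T).
have := HM T HT; rewrite Rabs_pos_eq; last by apply: pow_le; lra.
by have := geom T; lra.
Qed.

Lemma noquit_affine_cvg c delta A :
  0 < delta -> (forall t, delta <= quit_prob x t) ->
  Un_cv (fun T => A + noquit x T * c) A.
Proof.
move=> delta_gt0 delta_le.
have noquit_c := CV_mult _ _ _ _ (noquit_cvg0 delta_gt0 delta_le) (cvg_const c).
by have := CV_plus _ _ _ _ (cvg_const A) noquit_c; rewrite Rmult_0_l Rplus_0_r.
Qed.

Variables (r : game N) (k : 'I_N).
Hypothesis r_bounded : game_bounded r.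

Lemma payoffT_stages T :
  payoffT r x T k =
  \big[Rplus/0]_(t < T) (noquit x t * stage_payoff x t r k) + noquit x T * r set0 k.
Proof.
rewrite /payoffT; congr (_ + _); apply: eq_bigr => t _.
rewrite /stage_payoff big_distrr /=; apply: eq_bigr => S _.
by rewrite /pstop /stage_prob /split_prod; ring.
Qed.

Lemma payoffT_increment T :
  Rabs (payoffT r x T.+1 k - payoffT r x T k) <= 2 * noquit x T - 2 * noquit x T.+1.
Proof.
rewrite !payoffT_stages big_ord_recr /= noquitS.
have := stage_payoff_bounds T x_profile k r_bounded.
have := quit_prob_ge0_le1 T x_profile; have := noquit_ge0_le1 T; have := r_bounded set0 k.
set p := noquit x T; set E := stage_payoff x T r k; set Q := quit_prob x T.
set s := \big[Rplus/0]_(t < T) _ => hr hp hQ hE.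
have -> : s + p * E + p * (1 - Q) * r set0 k - (s + p * r set0 k) =
          p * E - (p * Q) * r set0 k by ring.
have hpQ : 0 <= p * Q by nra.
by apply: Rabs_le; split; nra.
Qed.

Lemma gamma_cvg : Un_cv (fun T => payoffT r x T k) (gamma r x k).
Proof.
rewrite /gamma; apply: epsilon_spec.
have [|l l_lim] := @cvg_dominated_increments (fun T => payoffT r x T k)
  (fun T => 2 * noquit x T) payoffT_increment.
  apply: decreasing_cv => [T | ].
    by rewrite noquitS; have := noquit_ge0_le1 T; have := quit_prob_ge0_le1 T x_profile; nra.
  by exists 0 => _ [T ->]; rewrite /opp_seq; have := noquit_ge0_le1 T; lra.
by exists l.
Qed.

Lemma gamma_le delta A :
  0 < delta -> (forall t, delta <= quit_prob x t) ->
  (forall t, stage_payoff x t r k <= A * quit_prob x t) -> gamma r x k <= A.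
Proof.
move=> delta_gt0 delta_le E_le.
apply: (Rle_cv_lim _ gamma_cvg (noquit_affine_cvg (r set0 k - A) A delta_gt0 delta_le)) => T.
have : \big[Rplus/0]_(t < T) (noquit x t * stage_payoff x t r k) <= A * (1 - noquit x T).
  rewrite -sum_noquit_quit_prob big_distrr /=; apply: Rsum_le => t _.
  by have := noquit_ge0_le1 t; have := E_le t; nra.
rewrite payoffT_stages; nra.
Qed.

Lemma gamma_ge delta A :
  0 < delta -> (forall t, delta <= quit_prob x t) ->
  (forall t, A * quit_prob x t <= stage_payoff x t r k) -> A <= gamma r x k.
Proof.
move=> delta_gt0 delta_le E_ge.
apply: (Rle_cv_lim _ (noquit_affine_cvg (r set0 k - A) A delta_gt0 delta_le) gamma_cvg) => T.
have : A * (1 - noquit x T) <= \big[Rplus/0]_(t < T) (noquit x t * stage_payoff x t r k).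
  rewrite -sum_noquit_quit_prob big_distrr /=; apply: Rsum_le => t _.
  by have := noquit_ge0_le1 t; have := E_ge t; nra.
rewrite payoffT_stages; nra.
Qed.

End Play.

Lemma deviate_profile N (x : profile N) k y :
  is_profile x -> is_strategy y -> is_profile (deviate x k y).
Proof. by move=> x_profile y_strategy m; rewrite /deviate; case: ifP. Qed.

Section TwoQuitters.
Variables (N : nat) (r : game N) (i j : 'I_N) (d : R).
Hypotheses (r_bounded : game_bounded r) (ij : i != j) (d_gt0 : 0 < d) (d_le1 : d <= 1).

Definition two_quitters : profile N :=
  fun m _ => if m == i then d else if m == j then d * d else 0.

Lemma two_quitters_profile : is_profile two_quitters.
Proof. by move=> m t; rewrite /two_quitters; case: ifP => _; [lra | case: ifP => _; nra]. Qed.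

Lemma two_quitters_self t : two_quitters i t = d.
Proof. by rewrite /two_quitters eqxx. Qed.

Lemma two_quitters_other m t : m != i -> two_quitters m t = if m == j then d * d else 0.
Proof. by rewrite /two_quitters => /negbTE ->. Qed.

Lemma gamma_two_quitters_ge k :
  0 <= r [set i] k -> r [set i] k - 2 * d <= gamma r two_quitters k.
Proof.
move=> A_ge0; have A_le1 := proj2 (r_bounded [set i] k).
set A := r [set i] k in A_ge0 A_le1 *.
have Q_ge t : d <= quit_prob two_quitters t.
  by rewrite -(two_quitters_self t); apply: quit_prob_ge two_quitters_profile _.
apply: (gamma_ge two_quitters_profile r_bounded d_gt0 Q_ge) => t.
have others_le : \big[Rplus/0]_(m | m != i) two_quitters m t <= d * d.
  apply: (@Rsum_le_point _ (fun m => m != i) j) => [|m mi]; first nra.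
  by rewrite two_quitters_other //; apply: Rle_refl.
have := stage_payoff_ge_single two_quitters_profile r_bounded A_ge0 (Rle_refl A) others_le.
have := Q_ge t; nra.
Qed.

Lemma gamma_deviate_self_le y :
  is_strategy y -> r [set i] i = 0 -> r [set j] i <= 0 ->
  gamma r (deviate two_quitters i y) i <= d * d.
Proof.
move=> y_strategy rii rji; set z := deviate two_quitters i y.
have z_profile : is_profile z by apply: deviate_profile two_quitters_profile y_strategy.
have ji : j != i by rewrite eq_sym.
have zj t : z j t = d * d by rewrite /z /deviate (negbTE ji) two_quitters_other // eqxx.
have Q_ge t : d * d <= quit_prob z t by rewrite -(zj t); apply: quit_prob_ge z_profile _.
apply: (gamma_le z_profile r_bounded _ Q_ge) => [|t]; first nra.
have others_le : \big[Rplus/0]_(m | m \notin [set j; i]) z m t <= 0.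
  rewrite big1 => [|m]; first lra.
  rewrite !inE negb_or => /andP [mj mi].
  by rewrite /z /deviate (negbTE mi) two_quitters_other // (negbTE mj).
have := stage_payoff_le_pair z_profile r_bounded ji (Rle_refl 0) rji
  (Req_le _ _ rii) others_le.
have := quit_prob_ge t z_profile i; have := z_profile i t; rewrite zj; nra.
Qed.

Lemma gamma_deviate_other_le k y :
  k != i -> is_strategy y -> 0 <= r [set i] k -> r [set k] k = 0 ->
  gamma r (deviate two_quitters k y) k <= r [set i] k + 2 * d.
Proof.
move=> ki y_strategy A_ge0 rkk; set z := deviate two_quitters k y.
have z_profile : is_profile z by apply: deviate_profile two_quitters_profile y_strategy.
have ik : i != k by rewrite eq_sym.
have zi t : z i t = d by rewrite /z /deviate (negbTE ik) two_quitters_self.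
have Q_ge t : d <= quit_prob z t by rewrite -(zi t); apply: quit_prob_ge z_profile _.
apply: (gamma_le z_profile r_bounded d_gt0 Q_ge) => t.
have others_le : \big[Rplus/0]_(m | m \notin [set i; k]) z m t <= d * d.
  apply: (@Rsum_le_point _ (fun m => m \notin [set i; k]) j) => [|m]; first nra.
  rewrite !inE negb_or => /andP [mi mk].
  by rewrite /z /deviate (negbTE mk) two_quitters_other //; apply: Rle_refl.
have := stage_payoff_le_pair z_profile r_bounded ik A_ge0 (Rle_refl _)
  (Req_le _ _ rkk) others_le.
have := quit_prob_ge t z_profile k; have := z_profile k t; rewrite zi; have := Q_ge t; nra.
Qed.

End TwoQuitters.

Theorem lemma1 (N : nat) (r : game N) :
  game_bounded r ->
  (forall i : 'I_N, r [set i] i = 0%R) ->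
  (exists i : 'I_N, normal r i /\ forall j : 'I_N, (0 <= r [set i] j)%R) ->
  forall eps : R, (eps > 0)%R ->
    exists x : profile N, is_profile x /\ is_stationary x /\ eps_equilibrium r x eps.
Proof.
move=> r_bounded r_self0 [i [i_normal ri_ge0]] eps eps_gt0.
have [_ [j [ji [_ rji]]]] := i_normal 1%nat.
have ij : i != j by apply/eqP => /esym.
pose d := Rmin 1 (eps / 4).
have d_gt0 : 0 < d by apply: Rmin_glb_lt; lra.
have d_le1 : d <= 1 := Rmin_l _ _.
have d_le : d <= eps / 4 := Rmin_r _ _.
exists (two_quitters i j d); split; first exact: two_quitters_profile.
split=> [m t // | k y y_strategy].
have := gamma_two_quitters_ge j r_bounded d_gt0 d_le1 (ri_ge0 k).
case: (eqVneq k i) => [-> | ki].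
  have := gamma_deviate_self_le r_bounded ij d_gt0 d_le1 y_strategy (r_self0 i) rji.
  rewrite r_self0; nra.
have := gamma_deviate_other_le j r_bounded d_gt0 d_le1 ki y_strategy (ri_ge0 k) (r_self0 k).
lra.
Qed.
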